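(* Let $D=(V,E;s,t)$, $N$, $M$ be as in the context, let $x\in\mathcal{C}(\widetilde\Gamma_D)$ and let $\phi_x$ be its potential. Then $(x,\phi_x)$ satisfies (a) $x(e)+\phi_x(u)-\phi_x(v)\ge0$ for all $e=(u,v)\in N$; (b) $\phi_x(u)-\phi_x(v)\ge0$ for all $e=(u,v)\in M$; (c) $\phi_x(s)=0$; (d) $\phi_x(t)=1$. Moreover, for every arc $e=(u,v)\in E$ such that some maximum-cardinality family of $s$-$t$ paths pairwise disjoint on $N$ has a path containing $e$, equality holds in (a) if $e\in N$ and in (b) if $e\in M$.
   Context: $D=(V,E;s,t)$ is a directed network with unit arc capacities (parallel arcs allowed); $N\subseteq E$ is the set of private arcs (players), $M=E\setminus N$ public arcs; every $s$-$t$ path contains an arc of $N$ and every arc lies on some $s$-$t$ path. Two paths are disjoint on $N$ if they share no arc of $N$; $\sigma_N$ is the maximum number of $s$-$t$ paths pairwise disjoint on $N$. For $S\subseteq N$, $\gamma(S)$ is the maximum number of pairwise arc-disjoint $s$-$t$ paths in $D_S=(V,S\cup M;s,t)$. The auxiliary game $\widetilde\Gamma_D=(N,\tilde\gamma)$ has $\tilde\gamma(N)=\sigma_N$, $\tilde\gamma(S)=\gamma(S)$ for $S\subsetneq N$; $\chi(\widetilde\Gamma_D)=\{x\in\mathbb{R}^N_{\ge0}:x(N)=\sigma_N\}$ and $\mathcal{C}(\widetilde\Gamma_D)=\{x\in\chi(\widetilde\Gamma_D): x(S)\ge\tilde\gamma(S)\ \forall S\subseteq N\}$ with $x(S)=\sum_{i\in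 S}x_i$. For $x\in\chi(\widetilde\Gamma_D)$, its potential $\phi_x\in\mathbb{R}^V$ is defined by giving each arc $e\in N$ length $x(e)$ and each arc of $M$ length $0$, and letting $\phi_x(v)$ be the length of a shortest $s$-$v$ path. *)

From HB Require Import structures.
From mathcomp Require Import all_boot all_order all_algebra.
From mathcomp Require Import boolp.
Set Implicit Arguments. Unset Strict Implicit. Unset Printing Implicit Defensive.
Import Order.TTheory GRing.Theory Num.Theory.

(* A directed multigraph: arcs E (finite type, parallel arcs allowed),
   vertices V, each arc e goes from tl e to hd e. *)
Section Net.
Variables (V E : finType) (tl hd : E -> V).

Fixpoint is_walk (u : V) (p : seq E) (v : V) : bool :=
  match p with
  | [::] => u == v
  | e :: p' => (tl e == u) && is_walk (hd e) p' v
  end.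

Definition is_path (u : V) (p : seq E) (v : V) : bool :=
  is_walk u p v && uniq (u :: map hd p).

Definition arc_disjoint_family (A : {set E}) (s t : V) (F : seq (seq E)) : Prop :=
  (forall p, p \in F -> is_path s p t /\ {subset p <= A}) /\
  pairwise (fun p q => ~~ has (fun e => e \in q) p) F.

Definition N_disjoint_family (N : {set E}) (s t : V) (F : seq (seq E)) : Prop :=
  (forall p, p \in F -> is_path s p t) /\
  pairwise (fun p q => ~~ has (fun e => (e \in q) && (e \in N)) p) F.

(* sigma_N : maximum number of s-t paths pairwise disjoint on N
   (bounded by #|E| under the standing assumptions) *)
Definition sigmaN (N : {set E}) (s t : V) : nat :=
  \max_(k < #|E|.+1 | `[< exists F, N_disjoint_family N s t F /\ size F = k >]) k.

(* gamma(S): max number of pairwise arc-disjoint s-t paths in D_S = (V, S u M) *)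
Definition gamma (N S : {set E}) (s t : V) : nat :=
  \max_(k < #|E|.+1 |
        `[< exists F, arc_disjoint_family (S :|: ~: N) s t F /\ size F = k >]) k.

Definition gamma_tilde (N S : {set E}) (s t : V) : nat :=
  if S == N then sigmaN N s t else gamma N S s t.

Variable R : realFieldType.
Local Open Scope ring_scope.

(* x in R^N is represented by x : E -> R; only its values on N are used. *)
Definition xsum (x : E -> R) (S : {set E}) : R := \sum_(e in S) x e.

Definition in_core (N : {set E}) (s t : V) (x : E -> R) : Prop :=
  (forall e, e \in N -> 0 <= x e) /\
  xsum x N = (sigmaN N s t)%:R /\
  (forall S : {set E}, S \subset N -> (gamma_tilde N S s t)%:R <= xsum x S).

Definition plen (N : {set E}) (x : E -> R) (p : seq E) : R :=
  \sum_(e <- p | e \in N) x e.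

Definition is_potential (N : {set E}) (s : V) (x : E -> R) (phi : V -> R) : Prop :=
  forall v, (exists p, is_path s p v) ->
    (exists2 p, is_path s p v & phi v = plen N x p) /\
    (forall p, is_path s p v -> phi v <= plen N x p).

End Net.

(* The potential is a shortest-path distance for nonnegative lengths, so it
   satisfies the arc inequalities (a), (b) and phi(s) = 0.  Every s-t path p
   meets N, so the one-path family [p] gives the coalition of private arcs of p
   value at least 1, and the core inequality makes the length x(N ∩ p) of p at
   least 1.  In a maximum N-disjoint family no private arc is shared, so
   sigma_N <= total length <= x(N) = sigma_N and every path of the family has
   length exactly 1.  Hence phi(t) = 1, and along such a path the arc
   inequalities sum to phi(t) - phi(s) = 1 = its length, so each is tight. *)

From HB Require Import structures.
From mathcomp Require Import all_boot all_order all_algebra.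
From mathcomp Require Import boolp.
From mathcomp Require Import lra.
Set Implicit Arguments. Unset Strict Implicit. Unset Printing Implicit Defensive.
Import Order.TTheory GRing.Theory Num.Theory.
Local Open Scope ring_scope.

Section Walks.
Variables (V E : finType) (tl hd : E -> V).

Lemma is_walk_cat u p q v :
  is_walk tl hd u (p ++ q) v <->
  exists w, is_walk tl hd u p w /\ is_walk tl hd w q v.
Proof.
elim: p u => [|e p IH] u /=.
  by split=> [H|[w [/eqP <-]]] //; exists u; rewrite eqxx.
split=> [/andP[He /IH[w [Hp Hq]]]|[w [/andP[He Hp] Hq]]].
  by exists w; rewrite He Hp.
by rewrite He; apply/IH; exists w.
Qed.

Lemma is_path_nil u : is_path tl hd u [::] u.
Proof. by rewrite /is_path /= eqxx. Qed.

Lemma is_path_uniq u p v : is_path tl hd u p v -> uniq p.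
Proof. by case/andP=> _ /= /andP[_ /map_uniq]. Qed.

Lemma is_path_from_visited a p u v :
  is_path tl hd a p v -> u \in a :: map hd p ->
  exists2 q, is_path tl hd u q v & subseq q p.
Proof.
elim: p a => [|f p IH] a.
  by move=> /andP[/eqP-> _]; rewrite inE => /eqP->; exists [::]; rewrite ?is_path_nil.
move=> Hfp; rewrite in_cons => /orP[/eqP->|Hvis]; first by exists (f :: p).
move: Hfp; rewrite /is_path /= => /andP[/andP[_ Hw] /andP[_ Hu]].
have [q Hq sub_qp] := IH (hd f) (introT andP (conj Hw Hu)) Hvis.
by exists q => //; apply: subseq_trans sub_qp (subseq_cons p f).
Qed.

Lemma is_walk_subseq_path u w v :
  is_walk tl hd u w v -> exists2 p, is_path tl hd u p v & subseq p w.
Proof.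
elim: w u => [|e w IH] u /=; first by move/eqP->; exists [::]; rewrite ?is_path_nil.
case/andP=> /eqP He /IH[p Hp sub_pw].
have [Hvis|Hnew] := boolP (u \in hd e :: map hd p).
  have [q Hq sub_qp] := is_path_from_visited Hp Hvis.
  exists q => //; apply: subseq_trans (subseq_trans sub_qp sub_pw) (subseq_cons w e).
exists (e :: p); last by rewrite /= eqxx.
by move: Hp; rewrite /is_path /= He eqxx Hnew => /andP[-> ->].
Qed.

Lemma is_path_reach_tl u p v e :
  is_path tl hd u p v -> e \in p -> exists q, is_path tl hd u q (tl e).
Proof.
move=> Hp ep; case/splitPr: ep Hp => p1 p2.
case/andP=> /is_walk_cat[w [walk_p1 /= /andP[/eqP-> _]]] _.
by have [q Hq _] := is_walk_subseq_path walk_p1; exists q.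
Qed.

End Walks.

Section PathLength.
Variables (E : finType) (R : realFieldType) (N : {set E}) (x : E -> R).

Definition alen (e : E) : R := if e \in N then x e else 0.

Lemma plen_nil : plen N x [::] = 0.
Proof. by rewrite /plen big_nil. Qed.

Lemma plen_cons e p : plen N x (e :: p) = alen e + plen N x p.
Proof. by rewrite /plen /alen big_cons; case: ifP; rewrite ?add0r. Qed.

Lemma plen_cat p q : plen N x (p ++ q) = plen N x p + plen N x q.
Proof. by rewrite /plen big_cat. Qed.

Lemma plen_uniq p : uniq p -> plen N x p = xsum x [set e in p | e \in N].
Proof.
move=> p_uniq; rewrite /plen /xsum -big_filter big_uniq ?filter_uniq //.
by apply: eq_bigl => e; rewrite inE mem_filter andbC.
Qed.

Hypothesis x_ge0 : forall e, e \in N -> 0 <= x e.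

Lemma alen_ge0 e : 0 <= alen e.
Proof. by rewrite /alen; case: ifP => // /x_ge0. Qed.

Lemma plen_ge0 p : 0 <= plen N x p.
Proof. by apply: sumr_ge0 => e /x_ge0. Qed.

Lemma plen_subseq p q : subseq p q -> plen N x p <= plen N x q.
Proof.
elim: q p => [|f q IH] p; first by rewrite subseq0 => /eqP->.
case: p => [|e p] /=; first by rewrite plen_nil plen_ge0.
case: eqP => [-> /IH|_ /IH le_q]; first by rewrite !plen_cons lerD2l.
by apply: le_trans le_q _; rewrite plen_cons lerDr alen_ge0.
Qed.

(* The left-hand side counts each arc of [U] at most once. *)
Lemma sum_plen_le_xsum (F : seq (seq E)) (U : {set E}) :
  U \subset N -> (forall p, p \in F -> uniq p) ->
  pairwise (fun p q => ~~ has (fun e => (e \in q) && (e \in N)) p) F ->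
  (forall p e, p \in F -> e \in p -> e \in N -> e \in U) ->
  \sum_(p <- F) plen N x p <= xsum x U.
Proof.
elim: F U => [|p F IH] U sub_UN F_uniq.
  by move=> _ _; rewrite big_nil /xsum sumr_ge0 // => e /(subsetP sub_UN)/x_ge0.
rewrite pairwise_cons big_cons => /andP[p_disj F_disj] F_U.
set S := [set e in p | e \in N].
have sub_SU : S \subset U.
  by apply/subsetP => e; rewrite inE => /andP[ep eN]; apply: (F_U p) => //; apply: mem_head.
have -> : xsum x U = xsum x S + xsum x (U :\: S).
  by rewrite /xsum (big_setID S) /= (setIidPr sub_SU).
rewrite plen_uniq ?F_uniq ?mem_head // lerD //.
apply: IH => [||//|q e qF eq eN].
- by apply: subset_trans sub_UN; apply: subsetDl.
- by move=> q qF; apply: F_uniq; rewrite in_cons qF orbT.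
rewrite !inE eN andbT (F_U q) ?in_cons ?qF ?orbT // andbT.
by apply: contra (allP p_disj q qF) => ep; apply/hasP; exists e; rewrite ?eq ?eN.
Qed.

End PathLength.

Section ArcInequalities.
Variables (V E : finType) (tl hd : E -> V) (R : realFieldType).
Variables (N : {set E}) (x : E -> R) (phi : V -> R).
Hypothesis phi_arc : forall e, phi (hd e) <= phi (tl e) + alen N x e.

Lemma walk_phi_le u w v : is_walk tl hd u w v -> phi v <= phi u + plen N x w.
Proof.
elim: w u => [|e w IH] u /=; first by move/eqP->; rewrite plen_nil addr0.
case/andP=> /eqP <- /IH le_v; rewrite plen_cons addrA.
by apply: le_trans le_v _; rewrite lerD2r phi_arc.
Qed.

Lemma walk_phi_tight u w v e :
  is_walk tl hd u w v -> phi u + plen N x w <= phi v -> e \in w ->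
  phi (hd e) = phi (tl e) + alen N x e.
Proof.
move=> + + e_w; case/splitPr: e_w => w1 w2 /is_walk_cat[a [walk_w1 /= /andP[/eqP tl_e walk_w2]]].
rewrite -tl_e in walk_w1; rewrite plen_cat plen_cons => le_v.
have := walk_phi_le walk_w1; have := walk_phi_le walk_w2; have := phi_arc e.
lra.
Qed.

End ArcInequalities.

Section Potential.
Variables (V E : finType) (tl hd : E -> V) (R : realFieldType).
Variables (N : {set E}) (x : E -> R) (s : V) (phi : V -> R).
Hypothesis x_ge0 : forall e, e \in N -> 0 <= x e.
Hypothesis phi_potential : is_potential tl hd N s x phi.

Lemma potential_source : phi s = 0.
Proof.
have [[p _ ->] phi_min] := phi_potential (ex_intro _ [::] (is_path_nil tl hd s)).
by apply/eqP; rewrite eq_le plen_ge0 // andbT -(plen_nil N x) phi_min ?is_path_nil.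
Qed.

(* [is_potential] only bounds [phi] by lengths of paths; shortcutting a walk to a path never lengthens it. *)
Lemma potential_walk_le v w :
  (exists p, is_path tl hd s p v) -> is_walk tl hd s w v -> phi v <= plen N x w.
Proof.
move=> /phi_potential[_ phi_min] /is_walk_subseq_path[p Hp sub_pw].
exact: le_trans (phi_min p Hp) (plen_subseq x_ge0 sub_pw).
Qed.

Lemma potential_arc_le e :
  (exists p, is_path tl hd s p (tl e)) -> phi (hd e) <= phi (tl e) + alen N x e.
Proof.
move=> reach_e; have [[p Hp ->] _] := phi_potential reach_e.
have walk_pe : is_walk tl hd s (p ++ [:: e]) (hd e).
  by apply/is_walk_cat; exists (tl e); case/andP: Hp => -> _; rewrite /= !eqxx.
have [q Hq _] := is_walk_subseq_path walk_pe.
have -> : plen N x p + alen N x e = plen N x (p ++ [:: e]).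
  by rewrite plen_cat plen_cons plen_nil addr0.
by apply: potential_walk_le walk_pe; exists q.
Qed.

End Potential.

Section Game.
Variables (V E : finType) (tl hd : E -> V) (s t : V) (N : {set E}).

Lemma leq_sigmaN F :
  N_disjoint_family tl hd N s t F -> (size F <= #|E|)%N ->
  (size F <= sigmaN tl hd N s t)%N.
Proof.
rewrite -ltnS => HF size_F.
by apply: (leq_bigmax_cond (Ordinal size_F)); apply/asboolP; exists F.
Qed.

Lemma leq_gamma S F :
  arc_disjoint_family tl hd (S :|: ~: N) s t F -> (size F <= #|E|)%N ->
  (size F <= gamma tl hd N S s t)%N.
Proof.
rewrite -ltnS => HF size_F.
by apply: (leq_bigmax_cond (Ordinal size_F)); apply/asboolP; exists F.
Qed.

Lemma sigmaN_attained :
  exists F, N_disjoint_family tl hd N s t F /\ size F = sigmaN tl hd N s t.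
Proof.
pose P (k : 'I_#|E|.+1) :=
  `[< exists F, N_disjoint_family tl hd N s t F /\ size F = k >].
have P_gt0 : (0 < #|P|)%N by apply/card_gt0P; exists ord0; apply/asboolP; exists [::].
have [k /asboolP[F [HF size_F]] max_k] := eq_bigmax_cond val P_gt0.
by exists F; rewrite size_F -max_k.
Qed.

Lemma sigmaN_gt0 p :
  is_path tl hd s p t -> has (fun e => e \in N) p -> (0 < sigmaN tl hd N s t)%N.
Proof.
move=> Hp /hasP[e0 _ _]; apply: (@leq_sigmaN [:: p]); last by apply/card_gt0P; exists e0.
by split=> // q; rewrite inE => /eqP->.
Qed.

(* [[:: p]] is admissible for [sigmaN] and, as [p] uses only private arcs of the coalition, for its [gamma]. *)
Lemma gamma_tilde_path_ge1 p :
  is_path tl hd s p t -> has (fun e => e \in N) p ->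
  (1 <= gamma_tilde tl hd N [set e in p | e \in N] s t)%N.
Proof.
move=> Hp pN; rewrite /gamma_tilde; case: ifP => _; first exact: sigmaN_gt0 pN.
case/hasP: pN => e0 _ _; apply: (@leq_gamma _ [:: p]); last by apply/card_gt0P; exists e0.
split=> // q; rewrite inE => /eqP->; split=> // e ep.
by rewrite !inE ep /=; case: (e \in N).
Qed.

End Game.

Section Core.
Variables (V E : finType) (tl hd : E -> V) (s t : V) (N : {set E}).
Variables (R : realFieldType) (x : E -> R).
Hypothesis st_path_meets_N : forall p, is_path tl hd s p t -> has (fun e => e \in N) p.
Hypothesis x_core : in_core tl hd N s t x.

Lemma core_plen_ge1 p : is_path tl hd s p t -> 1 <= plen N x p.
Proof.
move=> Hp; case: x_core => _ [_ x_coalition]; rewrite plen_uniq ?(is_path_uniq Hp) //.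
apply: le_trans (x_coalition _ _); first by rewrite ler1n gamma_tilde_path_ge1 ?st_path_meets_N.
by apply/subsetP => e; rewrite inE => /andP[].
Qed.

Lemma core_max_family_plen F p :
  N_disjoint_family tl hd N s t F -> size F = sigmaN tl hd N s t -> p \in F ->
  plen N x p = 1.
Proof.
case=> F_paths F_disj size_F pF.
have F_ge1 q : q \in F -> 1 <= plen N x q by move/F_paths/core_plen_ge1.
have : \sum_(q <- F) (plen N x q - 1) <= 0.
  rewrite sumrB subr_le0; case: x_core => x_ge0 [xN _].
  have -> : \sum_(q <- F) (1 : R) = (size F)%:R by rewrite -sum1_size natr_sum.
  rewrite size_F -xN.
  by apply: (sum_plen_le_xsum x_ge0 (U := N)) => // q /F_paths/is_path_uniq.
have : 0 <= \sum_(q <- rem p F) (plen N x q - 1).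
  by rewrite big_seq sumr_ge0 // => q /mem_rem/F_ge1; rewrite subr_ge0.
rewrite (big_rem _ pF) /=; have := F_ge1 p pF; lra.
Qed.

Lemma core_potential_sink phi :
  is_potential tl hd N s x phi -> (exists p, is_path tl hd s p t) -> phi t = 1.
Proof.
move=> phi_pot reach_t; have [[p0 Hp0 ->] phi_min] := phi_pot t reach_t.
have [F [HF size_F]] := sigmaN_attained tl hd s t N.
have [p Hp] := reach_t; have sigma_gt0 := sigmaN_gt0 Hp (st_path_meets_N Hp).
case: F HF size_F => [|p1 F] HF size_F; first by rewrite -size_F in sigma_gt0.
have plen_p1 := core_max_family_plen HF size_F (mem_head p1 F).
apply/eqP; rewrite eq_le core_plen_ge1 // andbT -plen_p1 phi_min //.
by case: HF => F_paths _; apply: F_paths; apply: mem_head.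
Qed.

End Core.

Theorem lemma8 (R : realFieldType) (V E : finType) (tl hd : E -> V) (s t : V)
    (N : {set E})
    (Hpath_ex : exists p, is_path tl hd s p t)
    (HN : forall p, is_path tl hd s p t -> has (fun e => e \in N) p)
    (Harc : forall e : E, exists2 p, is_path tl hd s p t & e \in p)
    (x : E -> R) (Hx : in_core tl hd N s t x)
    (phi : V -> R) (Hphi : is_potential tl hd N s x phi) :
  (forall e, e \in N -> 0 <= x e + phi (tl e) - phi (hd e)) /\
  (forall e, e \notin N -> 0 <= phi (tl e) - phi (hd e)) /\
  phi s = 0 /\
  phi t = 1 /\
  (forall e,
     (exists F, N_disjoint_family tl hd N s t F /\ size F = sigmaN tl hd N s t /\
                exists2 p, p \in F & e \in p) ->
     (e \in N -> x e + phi (tl e) - phi (hd e) = 0) /\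
     (e \notin N -> phi (tl e) - phi (hd e) = 0)).
Proof.
have [x_ge0 _] := Hx.
have phi_arc e : phi (hd e) <= phi (tl e) + alen N x e.
  by apply: (potential_arc_le x_ge0 Hphi); have [p /is_path_reach_tl] := Harc e; apply.
have phi_s := potential_source x_ge0 Hphi.
have phi_t := core_potential_sink HN Hx Hphi Hpath_ex.
split; [|split; [|do 2 split => //]].
- by move=> e eN; have := phi_arc e; rewrite /alen eN; lra.
- by move=> e eM; have := phi_arc e; rewrite /alen (negbTE eM); lra.
move=> e [F [HF [size_F [p pF ep]]]].
have [F_paths _] := HF; have /andP[walk_p _] := F_paths p pF.
have plen_p := core_max_family_plen HN Hx HF size_F pF.
have tight : phi (hd e) = phi (tl e) + alen N x e.
  by apply: (walk_phi_tight phi_arc walk_p _ ep); rewrite phi_s phi_t plen_p add0r.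
by split=> [eN|eM]; move: tight; rewrite /alen ?eN ?(negbTE eM); lra.
Qed.
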